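(* Let $G$ be a splittable query graph and $C_1,C_2\in\mathrm{Eq}$ with $C_1\ne C_2$. Then (1) either $C_1\notin coupled^+(C_2)$ or $C_2\notin coupled^+(C_1)$; and (2) if $C_1\in coupled^+(C_2)$, then $coupled^+(C_1)\subsetneq coupled^+(C_2)$.
   Context: $G=G[Q]$ is the query graph of a Boolean CQ without self-joins with atoms $R(u,v)$, $u\ne v$, first attribute the key: vertices are variables, each atom gives an edge $e_R=(u_R,v_R)$, consistent/inconsistent according to the type of $R$; $E^i$ = inconsistent edges. Paths may have zero edges; $x\leadsto y$ denotes a directed path, undirected paths ignore directions; for a path $P$ and vertex set $N$, $P\cap N$ is the set of vertices of $P$ (endpoints included) in $N$. $u^+=\{v:u\leadsto v\}$, $u^{+,R}=\{v: u\leadsto v$ in $G-\{e_R\}\}$. For $R,S\in E^i$: $R\sim S$ iff $u_S\in u_R^+$ and $u_R\in u_S^+$; $[R]$ the class of $R$; $coupled^+(R)=[R]\cup\{S\in E^i:\exists$ undirected path $P$ from $v_R$ to $u_S$ with $P\cap u_R^{+,R}=\emptyset\}$; $G$ is splittable if there are no $R,S\in E^i$ with $R\in coupled^+(S)$, $S\in coupled^+(R)$ and $R\not\sim S$. $\mathrm{Eq}$ is the set of $\sim$-classes of $E^i$. For $C\in\mathrm{Eq}$, $C^+=\bigcap_{R\in C}u_R^{+,R}$ and $coupled^+(C)=\{C\}\cup\{C'\in\mathrm{Eq}:\exists R\in C,S\in C'$ and an undirected path $P$ from $v_R$ to $u_S$ with $P\cap C^+=\emptyset\}$. *)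

(* A query graph: vertex type V (variables), edge type E
   (atoms; self-join-free so each atom is its own relation), edge e_R goes
   from src R = u_R to tgt R = v_R; inc is the set E^i of inconsistent edges. *)
From mathcomp Require Import all_boot.
Set Implicit Arguments. Unset Strict Implicit. Unset Printing Implicit Defensive.

Section QueryGraph.
Variables (V E : finType) (src tgt : E -> V) (inc : {set E}).

Definition dedge : rel V := fun x y => [exists e, (src e == x) && (tgt e == y)].
Definition dedge_wo (R : E) : rel V :=
  fun x y => [exists e, [&& e != R, src e == x & tgt e == y]].
Definition uedge : rel V := fun x y => dedge x y || dedge y x.

(* u^+ and u^{+,R} (paths may have zero edges: connect is reflexive) *)
Definition reach (u : V) : {set V} := [set v | connect dedge u v].
Definition reach_wo (R : E) (u : V) : {set V} := [set v | connect (dedge_wo R) u v].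

Definition equivR (R S : E) : bool :=
  (src S \in reach (src R)) && (src R \in reach (src S)).

Definition eqclass (R : E) : {set E} := [set S in inc | equivR R S].

(* exists an undirected path P from x to y with P \cap N = empty
   (all vertices of P, endpoints included, avoid N): x avoids N and y is
   reachable from x by undirected edges whose endpoints avoid N *)
Definition upath_avoid (N : {set V}) (x y : V) : bool :=
  (x \notin N) && connect (fun a b => uedge a b && (b \notin N)) x y.

Definition coupledE (R : E) : {set E} :=
  eqclass R :|: [set S in inc | upath_avoid (reach_wo R (src R)) (tgt R) (src S)].

Definition splittable : Prop :=
  ~ exists R S, [/\ R \in inc, S \in inc, R \in coupledE S, S \in coupledE R
                  & ~~ equivR R S].

Definition Eqc : {set {set E}} := [set C | [exists R in inc, C == eqclass R]].

Definition Cplus (C : {set E}) : {set V} := \bigcap_(R in C) reach_wo R (src R).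

Definition coupledC (C : {set E}) : {set {set E}} :=
  C |: [set C' in Eqc | [exists R in C, exists S in C',
                           upath_avoid (Cplus C) (tgt R) (src S)]].

End QueryGraph.

(* Write N(R) for u_R^{+,R} and say that an inconsistent edge R couples S when
   some undirected path from v_R to u_S avoids N(R), i.e. S lies in the second
   part of coupled^+(R).  The proof reduces the class-level notions to this
   edge-level coupling:
   - class coupling is witnessed by an edge: if a path from v_R (R in C) avoids
     C^+, then some R'' in C has a path from v_R'' to the same end avoiding
     N(R'') (lemma [coupledC_witness]);
   - an edge R that couples S couples every S' ~ S, unless R ~ S
     ([couples_equiv]), so if C couples C' some edge of C couples every edge
     of C' ([coupledC_edge]);
   - splittability forbids mutual coupling of non-equivalent edges, and hence
     makes coupling transitive: if R2 couples R1 and R1 couples T then R2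
     couples T ([couples_trans]).
   Part (1) of the theorem is then mutual coupling of two representatives;
   part (2) follows from transitivity, strictness from part (1). *)
From mathcomp Require Import all_boot.
Set Implicit Arguments. Unset Strict Implicit. Unset Printing Implicit Defensive.

Lemma connect_ind (T : finType) (e : rel T) (x : T) (P : T -> Prop) :
  P x -> (forall y z, connect e x y -> e y z -> P y -> P z) ->
  forall y, connect e x y -> P y.
Proof.
move=> Px IH y /connectP[p]; elim/last_ind: p y => [|p z IHp] y /=.
  by move=> _ ->.
rewrite rcons_path last_rcons => /andP[pp ez] ->.
apply: (IH (last x p)) => //; last exact: IHp.
by apply/connectP; exists p.
Qed.

Section QueryGraphCoupling.
Variables (V E : finType) (src tgt : E -> V) (inc : {set E}).

Local Notation "x ~> y" := (connect (dedge src tgt) x y) (at level 70).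
Local Notation Nplus R := (reach_wo src tgt R (src R)).
Local Notation avoids := (upath_avoid src tgt).
Local Notation Eq := (Eqc src tgt inc).

Definition couples (R S : E) : bool := avoids (Nplus R) (tgt R) (src S).

Lemma avoids_end (N : {set V}) x y : avoids N x y -> y \notin N.
Proof.
case/andP=> xN; apply: (@connect_ind _ _ _ (fun y => y \notin N)) => //.
by move=> a b _ /andP[].
Qed.

Lemma avoids_refl (N : {set V}) x : x \notin N -> avoids N x x.
Proof. by move=> xN; rewrite /upath_avoid xN connect0. Qed.

Lemma avoids_trans (N : {set V}) x y z : avoids N x y -> avoids N y z -> avoids N x z.
Proof. by case/andP=> xN c1 /andP[_ c2]; rewrite /upath_avoid xN (connect_trans c1 c2). Qed.

Lemma avoids_edge (N : {set V}) x y :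
  x \notin N -> y \notin N -> uedge src tgt x y -> avoids N x y.
Proof. by move=> xN yN xy; rewrite /upath_avoid xN connect1 // xy yN. Qed.

Lemma avoids_sub (N N' : {set V}) x y : N' \subset N -> avoids N x y -> avoids N' x y.
Proof.
move=> sub /andP[xN c]; apply/andP; split; first by apply: contra xN; apply: subsetP.
move: c; apply: connect_sub => a b /andP[ab bN]; apply: connect1.
by rewrite ab /=; apply: contra bN; apply: subsetP.
Qed.

Lemma dedgeP x y : reflect (exists e, src e = x /\ tgt e = y) (dedge src tgt x y).
Proof.
apply: (iffP existsP) => [[e /andP[/eqP a /eqP b]]|[e [a b]]]; exists e => //.
by rewrite a b !eqxx.
Qed.

Lemma uedge_dedge x y : dedge src tgt x y -> uedge src tgt x y.
Proof. by rewrite /uedge => ->. Qed.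

Lemma avoids_arc (N : {set V}) e :
  src e \notin N -> tgt e \notin N -> avoids N (src e) (tgt e).
Proof. by move=> sN tN; apply: avoids_edge => //; apply/uedge_dedge/dedgeP; exists e. Qed.

Lemma Nplus_src R : src R \in Nplus R.
Proof. by rewrite inE connect0. Qed.

Lemma Nplus_reach R x : x \in Nplus R -> src R ~> x.
Proof.
rewrite inE; apply: connect_sub => a b /existsP[e /and3P[_ a_e b_e]].
by apply/connect1/existsP; exists e; rewrite a_e b_e.
Qed.

Lemma Nplus_step R e : e != R -> src e \in Nplus R -> tgt e \in Nplus R.
Proof.
move=> eR; rewrite !inE => c; apply: (connect_trans c); apply: connect1.
by apply/existsP; exists e; rewrite eR !eqxx.
Qed.

(* A vertex reachable from u_R but outside N(R) must be reached through R,
   so it is joined to v_R by an undirected path outside N(R). *)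
Lemma reach_outside_Nplus R w :
  src R ~> w -> w \notin Nplus R -> avoids (Nplus R) (tgt R) w.
Proof.
move=> c wN.
suff: w \in Nplus R \/ avoids (Nplus R) (tgt R) w by rewrite (negbTE wN); case.
move: w c {wN}; apply: connect_ind; first by left; apply: Nplus_src.
move=> y z _ /dedgeP[e [ey ez]]; rewrite -{}ey -{}ez => yP.
case: (boolP (tgt e \in Nplus R)) => zN; [by left | right].
case: yP => [yN|u]; last exact: avoids_trans u (avoids_arc (avoids_end u) zN).
have [eR|eR] := eqVneq e R; first by move: zN; rewrite eR; apply: avoids_refl.
by rewrite Nplus_step in zN.
Qed.

Lemma Nplus_exit R w y : w \in Nplus R -> w ~> y -> y \in Nplus R \/ w ~> src R.
Proof.
move=> wN; move: y; apply: connect_ind; first by left.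
move=> y z wy /dedgeP[e [ey ez]]; rewrite -{}ez => -[yN|c]; last by right.
have [eR|eR] := eqVneq e R; first by right; rewrite -eR ey.
rewrite -ey in yN.
by left; apply: Nplus_step.
Qed.

Lemma equivE R S : equivR src tgt R S = (src R ~> src S) && (src S ~> src R).
Proof. by rewrite /equivR /reach !inE. Qed.

Lemma equiv_trans R S T :
  equivR src tgt R S -> equivR src tgt S T -> equivR src tgt R T.
Proof.
rewrite !equivE => /andP[a b] /andP[c d].
by rewrite (connect_trans a c) (connect_trans d b).
Qed.

Lemma equiv_sym R S : equivR src tgt R S -> equivR src tgt S R.
Proof. by rewrite !equivE andbC. Qed.

Lemma EqP C : C \in Eq -> exists2 R0, R0 \in inc & C = eqclass src tgt inc R0.
Proof. by rewrite inE => /exists_inP[R0 R0i /eqP->]; exists R0. Qed.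

Lemma Eq_inc C R : C \in Eq -> R \in C -> R \in inc.
Proof. by case/EqP=> R0 _ ->; rewrite inE => /andP[]. Qed.

Lemma Eq_equiv C R S : C \in Eq -> R \in C -> S \in C -> equivR src tgt R S.
Proof.
case/EqP=> R0 _ ->; rewrite !inE => /andP[_ e1] /andP[_ e2].
exact: equiv_trans (equiv_sym e1) e2.
Qed.

Lemma Eq_nequiv C C' R S : C \in Eq -> C' \in Eq ->
  R \in C -> S \in C' -> C != C' -> ~~ equivR src tgt R S.
Proof.
move=> hC hC' RC SC; apply: contraNN => eRS.
move: RC SC; case/EqP: hC => R1 _ ->; case/EqP: hC' => R2 _ ->.
rewrite !inE => /andP[_ e1] /andP[_ e2].
have e12 := equiv_trans e1 (equiv_trans eRS (equiv_sym e2)).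
apply/eqP/setP => X; rewrite !inE; case: (X \in inc) => //=.
by apply/idP/idP => h; [apply: equiv_trans (equiv_sym e12) h | apply: equiv_trans e12 h].
Qed.

Lemma Cplus_sub (C : {set E}) R : R \in C -> Cplus src tgt C \subset Nplus R.
Proof. by move=> RC; apply: bigcap_inf. Qed.

(* A vertex reachable from the class C but outside C^+ is outside some N(R3),
   hence joined to v_R3 avoiding N(R3). *)
Lemma reach_outside_Cplus (C : {set E}) R z : C \in Eq -> R \in C -> src R ~> z ->
  z \notin Cplus src tgt C -> exists2 R3, R3 \in C & avoids (Nplus R3) (tgt R3) z.
Proof.
move=> hC RC c zN.
have [R3 R3C zN3] : exists2 R3, R3 \in C & z \notin Nplus R3.
  by apply/exists_inP; apply: contraR zN => /exists_inPn h; apply/bigcapP => R3 /h/negPn.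
exists R3 => //; apply: reach_outside_Nplus zN3.
by move: (Eq_equiv hC R3C RC); rewrite equivE => /andP[h _]; apply: connect_trans h c.
Qed.

Lemma avoids_Cplus (C : {set E}) R y : C \in Eq -> R \in C ->
  avoids (Cplus src tgt C) (tgt R) y ->
  exists2 R'', R'' \in C & avoids (Nplus R'') (tgt R'') y.
Proof.
move=> hC RC /andP[tN]; move: y.
apply: (@connect_ind _ _ _ (fun y => exists2 R'', R'' \in C & avoids (Nplus R'') (tgt R'') y)).
  by apply: (reach_outside_Cplus hC RC) => //; apply/connect1/dedgeP; exists R.
move=> y z _ /andP[yz zN] [R'' R''C u].
case: (boolP (z \in Nplus R'')) => h; first exact: reach_outside_Cplus hC R''C (Nplus_reach h) zN.
by exists R'' => //; apply: avoids_trans u (avoids_edge (avoids_end u) h yz).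
Qed.

Lemma coupledC_witness C C' : C \in Eq -> C' \in coupledC src tgt inc C -> C' != C ->
  exists2 R, R \in C & exists2 S, S \in C' & couples R S.
Proof.
move=> hC; rewrite in_setU1 inE => /orP[/eqP->|/andP[_]]; first by rewrite eqxx.
case/exists_inP=> R RC /exists_inP[S SC' u] _.
by have [R'' R''C u''] := avoids_Cplus hC RC u; exists R'' => //; exists S.
Qed.

(* Conversely, an edge of C coupling an edge of the class C' puts C' into
   coupled^+(C), since C^+ is contained in N(R) for every R in C. *)
Lemma couples_coupledC (C C' : {set E}) R S : C' \in Eq -> R \in C -> S \in C' ->
  couples R S -> C' \in coupledC src tgt inc C.
Proof.
move=> hC' RC SC' u; rewrite in_setU1 inE hC' /=; apply/orP; right.
by apply/exists_inP; exists R => //; apply/exists_inP; exists S => //;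
  apply: avoids_sub (Cplus_sub RC) u.
Qed.

(* The strongly connected component of u_S misses N(R) when u_S does, as
   otherwise N(R) would lead back to u_R and make R ~ S. *)
Lemma scc_outside_Nplus R S w : ~~ equivR src tgt R S -> src S \notin Nplus R ->
  src S ~> w -> w ~> src S -> w \notin Nplus R.
Proof.
move=> ne sN c1 c2; apply/negP => wN.
case: (Nplus_exit wN c2) => [h|h]; first by rewrite h in sN.
move/negP: ne; apply; rewrite equivE (connect_trans c1 h) andbT.
exact: connect_trans (Nplus_reach wN) c2.
Qed.

(* If R couples S and R is not ~ S, then R couples every S' ~ S: the directed
   path from u_S to u_S' stays in the strongly connected component of u_S. *)
Lemma couples_equiv R S S' : ~~ equivR src tgt R S -> couples R S ->
  equivR src tgt S S' -> couples R S'.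
Proof.
move=> ne u; rewrite equivE => /andP[c1 c2]; have sN := avoids_end u.
apply: (avoids_trans u).
have scc : forall y, src S ~> y -> y ~> src S' -> avoids (Nplus R) (src S) y.
  apply: (@connect_ind _ _ _ (fun y => y ~> src S' -> avoids (Nplus R) (src S) y)).
    by move=> _; apply: avoids_refl.
  move=> y z cy yz IH czt; have u' := IH (connect_trans (connect1 yz) czt).
  have zN : z \notin Nplus R.
    exact: scc_outside_Nplus ne sN (connect_trans cy (connect1 yz)) (connect_trans czt c2).
  exact: avoids_trans u' (avoids_edge (avoids_end u') zN (uedge_dedge yz)).
exact: scc c1 (connect0 _ _).
Qed.

Lemma splittable_no_mutual R1 R2 : splittable src tgt inc -> R1 \in inc -> R2 \in inc ->
  ~~ equivR src tgt R1 R2 -> couples R2 R1 -> couples R1 R2 -> False.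
Proof.
move=> hs i1 i2 ne a b; apply: hs; exists R1, R2.
by split=> //; rewrite in_setU inE; apply/orP; right; rewrite ?i1 ?i2.
Qed.

(* If u_R1 lies outside N(R2), each vertex of N(R2) \ N(R1) reaches u_R2 by
   going backwards along an R2-free directed path, all of whose vertices stay
   outside N(R1). *)
Lemma Nplus_back R1 R2 z : src R1 \notin Nplus R2 -> z \in Nplus R2 ->
  z \notin Nplus R1 -> avoids (Nplus R1) z (src R2).
Proof.
move=> s1; rewrite [z \in _]inE; move: z.
apply: (@connect_ind _ _ _ (fun z => z \notin Nplus R1 -> avoids (Nplus R1) z (src R2))).
  exact: avoids_refl.
move=> y z cy yz IH zN; move: (yz) => /existsP[e /and3P[eR2 /eqP ey /eqP ez]].
have yN : y \notin Nplus R1.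
  apply/negP => yN; have [eR1|eR1] := eqVneq e R1.
    by move: s1; rewrite inE -eR1 ey cy.
  by move: zN; rewrite -ez Nplus_step ?ey.
apply: avoids_trans (avoids_edge zN yN _) (IH yN).
by apply/orP; right; apply/dedgeP; exists e.
Qed.

(* If R2 couples R1, everything R1 reaches avoiding N(R1) also avoids N(R2),
   since otherwise R1 would couple R2. *)
Lemma couples_avoid R1 R2 y : splittable src tgt inc -> R1 \in inc -> R2 \in inc ->
  ~~ equivR src tgt R1 R2 -> couples R2 R1 ->
  avoids (Nplus R1) (tgt R1) y -> avoids (Nplus R2) (tgt R1) y.
Proof.
move=> hs i1 i2 ne u2.
have outside y' : avoids (Nplus R1) (tgt R1) y' -> y' \notin Nplus R2.
  move=> u1; apply/negP => yN2; apply: (splittable_no_mutual hs i1 i2 ne u2).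
  exact: avoids_trans u1 (Nplus_back (avoids_end u2) yN2 (avoids_end u1)).
case/andP=> t1 c; move: y c.
apply: (@connect_ind _ _ _ (avoids (Nplus R2) (tgt R1))).
  by apply/avoids_refl/outside/avoids_refl.
move=> y z cy /andP[yz zN1] IH.
have zN2 : z \notin Nplus R2.
  by apply: outside; rewrite /upath_avoid t1 (connect_trans cy) // connect1 // yz zN1.
exact: avoids_trans IH (avoids_edge (avoids_end IH) zN2 yz).
Qed.

(* Coupling is transitive through a non-equivalent middle edge: the path from
   v_R2 to u_R1, the edge R1 and the path from v_R1 to u_T all avoid N(R2). *)
Lemma couples_trans R1 R2 T : splittable src tgt inc -> R1 \in inc -> R2 \in inc ->
  ~~ equivR src tgt R1 R2 -> couples R2 R1 -> couples R1 T -> couples R2 T.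
Proof.
move=> hs i1 i2 ne u21 u1T.
have t1 := couples_avoid hs i1 i2 ne u21 (avoids_refl (proj1 (andP u1T))).
apply: (avoids_trans u21 (avoids_trans (avoids_arc (avoids_end u21) (avoids_end t1)) _)).
exact: couples_avoid hs i1 i2 ne u21 u1T.
Qed.

Lemma coupledC_edge C1 C2 : C1 \in Eq -> C2 \in Eq -> C1 != C2 ->
  C1 \in coupledC src tgt inc C2 ->
  exists2 R2, R2 \in C2 & forall R1, R1 \in C1 -> couples R2 R1.
Proof.
move=> h1 h2 hne c12; have [R2 R2C [S SC1 u]] := coupledC_witness h2 c12 hne.
exists R2 => // R1 R1C; apply: couples_equiv (Eq_equiv h1 SC1 R1C) => //.
by apply: Eq_nequiv h2 h1 R2C SC1 _; rewrite eq_sym.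
Qed.

End QueryGraphCoupling.

Theorem proposition5p6 (V E : finType) (src tgt : E -> V) (inc : {set E})
  (hloop : forall e : E, src e != tgt e)
  (hsplit : splittable src tgt inc)
  (C1 C2 : {set E})
  (h1 : C1 \in Eqc src tgt inc) (h2 : C2 \in Eqc src tgt inc) (hne : C1 != C2) :
  (C1 \notin coupledC src tgt inc C2 \/ C2 \notin coupledC src tgt inc C1) /\
  (C1 \in coupledC src tgt inc C2 ->
     coupledC src tgt inc C1 \proper coupledC src tgt inc C2).
Proof.
have hne' : C2 != C1 by rewrite eq_sym.
have one_way : C1 \in coupledC src tgt inc C2 -> C2 \notin coupledC src tgt inc C1.
  move=> /(coupledC_edge h1 h2 hne)[R2 R2C c2]; apply/negP.
  move=> /(coupledC_edge h2 h1 hne')[R1 R1C c1].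
  exact: splittable_no_mutual hsplit (Eq_inc h1 R1C) (Eq_inc h2 R2C)
           (Eq_nequiv h1 h2 R1C R2C hne) (c2 R1 R1C) (c1 R2 R2C).
split; first by case: (boolP (C1 \in _)) => c; [right; apply: one_way | left].
move=> c12; rewrite properE; apply/andP; split; last first.
  by apply: contra (one_way c12) => /subsetP; apply; apply: setU11.
apply/subsetP => C' c1C'.
have [->|ne1] := eqVneq C' C1; first exact: c12.
have [R1 R1C [T TC' u1T]] := coupledC_witness h1 c1C' ne1.
have [R2 R2C c2] := coupledC_edge h1 h2 hne c12.
have hC' : C' \in Eqc src tgt inc by move: c1C'; rewrite in_setU1 inE (negbTE ne1) => /andP[].
apply: (couples_coupledC hC' R2C TC').
exact: couples_trans hsplit (Eq_inc h1 R1C) (Eq_inc h2 R2C)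
         (Eq_nequiv h1 h2 R1C R2C hne) (c2 R1 R1C) u1T.
Qed.
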